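(* On an $n$-node, $m$-edge undirected unweighted input graph, the construction described in the context runs in $\widetilde{O}(mn^{3/5})$ time with high probability.
   Context: Let $\mu=\lceil n^{2/5}\log^{1/5}n\rceil$. A node is heavy if its degree in $G$ is at least $\mu$, and light otherwise; an edge is heavy if at least one endpoint is heavy. $\Gamma_G(v)$ denotes the set consisting of $v$ and its neighbors. Construction of $H=(V,E')$: (1) $E'$ := all edges incident to light nodes. (2) Sample $S_1$ by including each node independently with probability $9\mu/n$; for each $x\in S_1$ add the edges of a BFS tree rooted at $x$ spanning $V$. (3) Sample $S_2$ by including each node independently with probability $1/\mu$; for each heavy node $x$ with $(\{x\}\cup\Gamma_G(x))\cap S_2=\varnothing$, add all edges incident to $x$. (4) For each heavy node $v\notin S_2$ with $\Gamma_G(v)\cap S_2\neq\varnothing$, choose arbitrarily one $x\in\Gamma_G(v)\cap S_2$ and add $(x,v)$. (5) For each $x_1\in S_2$, with $g=\mu^3/n+2$, assign weight $1+g^{-1}$ to every heavy edge and weight $1$ to every other edge, run Dijkstra's algorithm (with Fibonacci heaps) from $x_1$ to obtain minimum-weight paths $P(x_1,x_2)$ for all $x_2\in V$, and add the edges of $P(x_1,x_2)$ to $E'$ for every $x_2\in S_2$. $\widetilde{O}$ hides polylogarithmic factors; ''with high probability'' means with probability at least $1-1/n^c$ for some constant $c>0$. *)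

From mathcomp Require Import all_boot all_order all_algebra.
From mathcomp Require Import reals exp.
Set Implicit Arguments. Unset Strict Implicit. Unset Printing Implicit Defensive.
Import Order.TTheory GRing.Theory Num.Theory.
Local Open Scope ring_scope.

(* Graphs: vertex set 'I_n, edge relation e : rel 'I_n, assumed symmetric and
   irreflexive (undirected simple unweighted graph). *)
Section Graph.
Variable n : nat.
Variable e : rel 'I_n.

Definition nbrs (x : 'I_n) : {set 'I_n} := [set y | e x y].
Definition deg (x : 'I_n) : nat := #|nbrs x|.
Definition Gam (x : 'I_n) : {set 'I_n} := x |: nbrs x.
Definition nedges : nat := #|[set p : 'I_n * 'I_n | e p.1 p.2 & (p.1 < p.2)%N]|.
Definition gconnected : Prop := forall x y : 'I_n, connect e x y.
End Graph.

Section Costs.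
Variable R : realType.

Definition mu (n : nat) : nat :=
  `| Num.ceil (powR (n%:R : R) (2 / 5) * powR (ln (n%:R : R)) (1 / 5)) |%N.

(* sampling probabilities of S1 (9 mu / n, capped at 1) and S2 (1 / mu) *)
Definition p1 (n : nat) : R := Num.min 1 ((9 * mu n)%:R / n%:R).
Definition p2 (n : nat) : R := (mu n)%:R^-1.

Definition heavy (n : nat) (e : rel 'I_n) (x : 'I_n) : bool := (mu n <= deg e x)%N.

(* Unit-cost accounting of the construction of H, step by step, with the
   standard costs of its primitives on an n-node m-edge graph:
   - scanning the adjacency list of a node x: 1 + deg x;
   - one BFS from a root: n + m;
   - one Dijkstra run with Fibonacci heaps: m + n ln n;
   - adding the union of the minimum-weight paths P(x1,x2), x2 in S2, which
     all lie in the shortest-path tree of x1: n. *)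
Definition cost_step1 n (e : rel 'I_n) : R :=
  (\sum_(v : 'I_n) (1 + deg e v))%:R.
Definition cost_step2 n (e : rel 'I_n) (S1 : {set 'I_n}) : R :=
  #|S1|%:R * (n + nedges e)%:R.
Definition cost_step3 n (e : rel 'I_n) (S2 : {set 'I_n}) : R :=
  (\sum_(x : 'I_n | heavy e x) (1 + deg e x
       + (if [disjoint Gam e x & S2] then deg e x else 0)))%:R.
Definition cost_step4 n (e : rel 'I_n) (S2 : {set 'I_n}) : R :=
  (\sum_(v : 'I_n | heavy e v && (v \notin S2)) (1 + deg e v))%:R.
Definition cost_step5 n (e : rel 'I_n) (S2 : {set 'I_n}) : R :=
  #|S2|%:R * ((nedges e)%:R + n%:R * ln (n%:R : R) + n%:R).

Definition cost n (e : rel 'I_n) (S1 S2 : {set 'I_n}) : R :=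
  cost_step1 e + cost_step2 e S1 + cost_step3 e S2 + cost_step4 e S2
  + cost_step5 e S2.

Definition bern_set (n : nat) (p : R) (S : {set 'I_n}) : R :=
  p ^+ #|S| * (1 - p) ^+ (n - #|S|).

(* Probability of an event on (S1, S2), with S1 and S2 sampled independently
   as in steps (2) and (3). *)
Definition Pr_samples (n : nat) (E : {set 'I_n} -> {set 'I_n} -> bool) : R :=
  \sum_(S1 : {set 'I_n}) \sum_(S2 : {set 'I_n})
     (E S1 S2)%:R * (bern_set (p1 n) S1 * bern_set (p2 n) S2).
End Costs.

From mathcomp Require Import all_boot all_order all_algebra.
From mathcomp Require Import reals sequences exp.
From mathcomp Require Import ring lra zify.
Set Implicit Arguments.
Unset Strict Implicit.
Unset Printing Implicit Defensive.
Import Order.TTheory GRing.Theory Num.Theory.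
Local Open Scope ring_scope.

(* Steps (1), (3) and (4) read every adjacency list at most twice, so they cost
   O(n + m), and connectivity gives n <= 2m; steps (2) and (5) cost |S1| (n + m)
   and |S2| (m + n ln n + n).  By a Chernoff bound, a random subset keeping each
   of n nodes with probability p has more than 2pn + 4 ln n elements with
   probability at most n^-2.  As p1 n <= 9 mu = O(n^(2/5) ln n) and
   p2 n <= n / n^(2/5) = n^(3/5), a union bound gives, with probability at least
   1 - 1/n, |S1| = O(n^(3/5) ln^2 n) and |S2| = O(n^(3/5) ln n), hence a total
   cost O(m n^(3/5) ln^2 n). *)

Lemma exprD_subsets (R : comPzSemiRingType) (T : finType) (a b : R) :
  (a + b) ^+ #|T| = \sum_(S : {set T}) a ^+ #|S| * b ^+ (#|T| - #|S|).
Proof.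
rewrite -prodr_const bigA_distr; apply: eq_bigr => S _.
rewrite (bigID (mem S)) /=.
rewrite (eq_bigr (fun=> a)); last by move=> i ->.
rewrite [X in _ * X](eq_bigr (fun=> b)); last by move=> i /negbTE ->.
rewrite !prodr_const; congr (_ * _ ^+ _).
by rewrite -(cardC (mem S)) addKn; apply: eq_card => i; rewrite !inE.
Qed.

Lemma ln2_ge_half (R : realType) : 1 / 2 <= ln (2 : R).
Proof.
have := @le_ln1Dx R (- (1 / 2)) ltac:(lra).
have -> : 1 + - (1 / 2) = (2 : R)^-1 by field.
by rewrite lnV ?posrE //; lra.
Qed.

Lemma expR_half_le2 (R : realType) : expR (1 / 2 : R) <= 2.
Proof. by rewrite -[leRHS]lnK ?posrE // ler_expR ln2_ge_half. Qed.

Section BernoulliSubset.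
Variables (R : realType) (n : nat) (p : R).
Hypothesis p01 : 0 <= p <= 1.

Lemma bern_set_ge0 (S : {set 'I_n}) : 0 <= bern_set p S.
Proof. by case/andP: p01 => p0 p1; rewrite mulr_ge0 ?exprn_ge0 ?subr_ge0. Qed.

Lemma bern_set_mgf (x : R) :
  \sum_(S : {set 'I_n}) bern_set p S * x ^+ #|S| = (p * x + (1 - p)) ^+ n.
Proof.
rewrite -[in RHS](card_ord n) exprD_subsets; apply: eq_bigr => S _.
by rewrite /bern_set card_ord mulrAC -exprMn.
Qed.

Lemma bern_set_sum1 : \sum_(S : {set 'I_n}) bern_set p S = 1.
Proof.
have := bern_set_mgf 1; rewrite mulr1 addrC subrK expr1n => <-.
by apply: eq_bigr => S _; rewrite expr1n mulr1.
Qed.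

(* Chernoff bound with the exponential moment at 1/2, where e^(1/2) <= 2. *)
Lemma bern_set_tail (t theta : R) : 2 * p * n%:R + 2 * t <= theta ->
  \sum_(S : {set 'I_n}) (theta < #|S|%:R)%R%:R * bern_set p S <= expR (- t).
Proof.
move=> theta_ge; have [p0 p1] := andP p01.
set y := expR (1 / 2 : R); have y2 : y <= 2 := expR_half_le2 R.
have y0 : 0 < y by rewrite expR_gt0.
apply: (@le_trans _ _ (expR (- (theta / 2)) * (p * y + (1 - p)) ^+ n)).
  rewrite -bern_set_mgf big_distrr /=; apply: ler_sum => S _.
  rewrite mulrC mulrCA ler_wpM2l ?bern_set_ge0 //.
  rewrite /y -expRM_natl -expRD.
  case: ltrP => [lt_theta|_]; last by rewrite mulr0n expR_ge0.
  by rewrite mulr1n; apply: le_trans (expR_ge1Dx _); lra.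
have base_le : p * y + (1 - p) <= expR p by apply: le_trans (expR_ge1Dx _); nra.
apply: (@le_trans _ _ (expR (- (theta / 2)) * expR (p * n%:R))).
  rewrite ler_wpM2l ?expR_ge0 // expRM_natr lerXn2r ?nnegrE ?expR_ge0 //; nra.
by rewrite -expRD ler_expR; lra.
Qed.

End BernoulliSubset.

Lemma sum_weight_predC (R : pzRingType) (T : finType) (a : pred T) (w : T -> R) :
  \sum_x w x = 1 -> \sum_x (~~ a x)%:R * w x = 1 - \sum_x (a x)%:R * w x.
Proof.
move=> w_sum; rewrite -[X in X - _]w_sum -sumrB; apply: eq_bigr => x _.
by case: (a x); rewrite /= ?mulr0n ?mulr1n ?mul0r ?mul1r ?subr0 ?subrr.
Qed.

Lemma prod_weight_union_bound (R : realDomainType) (T : finType)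
    (E : T -> T -> bool) (a b : pred T) (w1 w2 : T -> R) :
  (forall x, 0 <= w1 x) -> (forall y, 0 <= w2 y) ->
  \sum_x w1 x = 1 -> \sum_y w2 y = 1 ->
  (forall x y, ~~ a x -> ~~ b y -> E x y) ->
  1 - \sum_x (a x)%:R * w1 x - \sum_y (b y)%:R * w2 y <=
  \sum_x \sum_y (E x y)%:R * (w1 x * w2 y).
Proof.
move=> w1_ge0 w2_ge0 w1_sum w2_sum Eab.
set A := \sum_x (a x)%:R * w1 x; set B := \sum_y (b y)%:R * w2 y.
have A_ge0 : 0 <= A by apply: sumr_ge0 => x _; rewrite mulr_ge0 ?ler0n.
have B_ge0 : 0 <= B by apply: sumr_ge0 => y _; rewrite mulr_ge0 ?ler0n.
apply: (@le_trans _ _ ((1 - A) * (1 - B))); first nra.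
rewrite -!sum_weight_predC // big_distrlr /=.
apply: ler_sum => x _; apply: ler_sum => y _.
rewrite mulrACA ler_wpM2r ?mulr_ge0 //.
case: (boolP (a x)) => [|ax]; first by rewrite mulr0n mul0r ler0n.
case: (boolP (b y)) => [|by_]; first by rewrite mulr0n mulr0 ler0n.
by rewrite (Eab _ _ ax by_) /= mulr1n mul1r.
Qed.

Lemma card_set_sum (T : finType) (P : pred T) :
  (#|[set x | P x]| = \sum_x P x)%N.
Proof. by rewrite -sum1dep_card big_mkcond; apply: eq_bigr => x _; case: (P x). Qed.

Section GraphCounting.
Local Open Scope nat_scope.
Variables (R : realType) (n : nat) (e : rel 'I_n).
Hypotheses (e_sym : symmetric e) (e_irr : irreflexive e).

Lemma sum_deg : \sum_v deg e v = 2 * nedges e.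
Proof.
have edges_lt : nedges e = \sum_x \sum_y (e x y && (x < y)).
  by rewrite /nedges card_set_sum pair_big /=; apply: eq_bigr => -[x y] _.
have edges_gt : nedges e = \sum_x \sum_y (e x y && (y < x)).
  rewrite edges_lt exchange_big /=.
  by apply: eq_bigr => x _; apply: eq_bigr => y _; rewrite e_sym.
rewrite mul2n -addnn {1}edges_lt edges_gt -big_split /=; apply: eq_bigr => x _.
rewrite /deg /nbrs card_set_sum -big_split /=; apply: eq_bigr => y _.
have [exy|//] := boolP (e x y).
have : x != y by apply: contraTneq exy => ->; rewrite e_irr.
by rewrite neq_ltn => /orP[] lt_xy; rewrite lt_xy ltnNge ltnW.
Qed.

Lemma sum_1Ddeg : \sum_v (1 + deg e v) = n + 2 * nedges e.
Proof. by rewrite big_split /= sum1_card card_ord sum_deg. Qed.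

Lemma deg_gt0 (v : 'I_n) : 1 < n -> gconnected e -> 0 < deg e v.
Proof.
move=> n_gt1 e_conn.
have [w w_neq_v] : exists w : 'I_n, w != v.
  have [v0|v_neq0] := eqVneq v (Ordinal (ltnW n_gt1)).
    by exists (Ordinal n_gt1); rewrite v0 -val_eqE.
  by exists (Ordinal (ltnW n_gt1)); rewrite eq_sym.
have /connectP[[|u p] /= path_vw last_w] := e_conn v w.
  by rewrite last_w eqxx in w_neq_v.
case/andP: path_vw => evu _.
by rewrite card_gt0; apply/set0Pn; exists u; rewrite inE.
Qed.

Lemma nodes_le_2edges : 1 < n -> gconnected e -> n <= 2 * nedges e.
Proof.
move=> n_gt1 e_conn; rewrite -sum_deg -[n in n <= _]card_ord -sum1_card.
by apply: leq_sum => v _; apply: deg_gt0.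
Qed.

Lemma cost_steps134_le (S2 : {set 'I_n}) :
  (cost_step1 R e + cost_step3 R e S2 + cost_step4 R e S2
     <= (3 * n + 8 * nedges e)%:R :> R)%R.
Proof.
rewrite /cost_step1 /cost_step3 /cost_step4 -!natrD ler_nat sum_1Ddeg.
have step3 : \sum_(x | heavy R e x) (1 + deg e x
    + (if [disjoint Gam e x & S2] then deg e x else 0)) <= n + 4 * nedges e.
  apply: (@leq_trans (\sum_x (1 + deg e x + deg e x))).
    rewrite big_mkcond; apply: leq_sum => x _.
    by case: ifP => // _; case: ifP; rewrite ?addn0 ?leq_addr.
  by rewrite big_split /= sum_1Ddeg sum_deg -addnA -mulnDl.
have step4 : \sum_(v | heavy R e v && (v \notin S2)) (1 + deg e v) <= n + 2 * nedges e.
  by rewrite -sum_1Ddeg big_mkcond; apply: leq_sum => v _; case: ifP.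
by apply: leq_trans (leq_add (leq_add (leqnn _) step3) step4) _; lia.
Qed.

End GraphCounting.

Lemma p1_itv (R : realType) (n : nat) : 0 <= p1 R n <= 1.
Proof. by rewrite le_min ler01 ge_min lexx divr_ge0 ?ler0n. Qed.

Lemma p2_itv (R : realType) (n : nat) : 0 <= p2 R n <= 1.
Proof.
rewrite invr_ge0 ler0n /= /p2; have [->|mu_gt0] := posnP (mu R n).
  by rewrite invr0 ler01.
by rewrite invf_le1 // ?ler1n ?ltr0n.
Qed.

Section LargeN.
Variables (R : realType) (n : nat).
Hypothesis n_ge4 : (4 <= n)%N.
Local Notation N := (n%:R : R).
Local Notation L := (ln N).
Local Notation q := (powR N (3 / 5)).

Lemma natr_n_ge1 : 1 <= N.
Proof. by rewrite (ler_nat R 1 n) (leq_trans _ n_ge4). Qed.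

Lemma natr_n_gt0 : 0 < N.
Proof. by apply: lt_le_trans natr_n_ge1. Qed.

Lemma powR_natr_ge1 r : 0 <= r -> 1 <= powR N r.
Proof.
by move=> r_ge0; rewrite -[leLHS](powRr0 N); apply: ler_powR => //; apply: natr_n_ge1.
Qed.

Lemma ln_nat_ge1 : 1 <= L.
Proof.
have ln4 : ln (4 : R) = 2 * ln 2.
  by rewrite (_ : 4 = 2 ^+ 2) ?lnXn ?mulr_natl // expr2 -natrM.
apply: le_trans (_ : ln 4 <= L).
  by rewrite ln4; have := ln2_ge_half R; lra.
by rewrite ler_ln ?posrE ?natr_n_gt0 // (ler_nat R 4 n).
Qed.

Lemma mu_bounds :
  powR N (2 / 5) <= (mu R n)%:R <= powR N (2 / 5) * L + 1.
Proof.
set a := powR N (2 / 5); set b := powR L (1 / 5).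
have L_ge1 := ln_nat_ge1.
have a_ge1 : 1 <= a by apply: powR_natr_ge1; lra.
have b_ge1 : 1 <= b by rewrite -[leLHS](powRr0 L); apply: ler_powR; lra.
have b_le : b <= L by apply: ler1_powR => //; lra.
have ab_ge0 : 0 <= a * b by rewrite mulr_ge0 //; lra.
have -> : (mu R n)%:R = (Num.ceil (a * b))%:~R :> R.
  by rewrite /mu natr_absz -/a -/b ger0_norm // ceil_ge0; lra.
have /andP[ceil_gt ceil_ge] := ceil_itv (a * b).
rewrite intrD -[(-1)%:~R]/(-1) in ceil_gt.
have ab_le : a * b <= a * L by rewrite ler_wpM2l //; lra.
have ab_ge : a <= a * b by rewrite ler_peMr //; lra.
by apply/andP; split; lra.
Qed.

Lemma powR_two_fifths_mul_three_fifths : powR N (2 / 5) * q = N.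
Proof.
rewrite -powRD; last by apply/implyP => _; rewrite gt_eqF ?natr_n_gt0.
by rewrite (_ : 2 / 5 + 3 / 5 = 1) ?powRr1 ?ltW ?natr_n_gt0 //; field.
Qed.

Lemma p1_threshold_le : 2 * p1 R n * N + 2 * (2 * L) <= 40 * (q * L ^+ 2).
Proof.
have L_ge1 := ln_nat_ge1; have [_ mu_le] := andP mu_bounds.
have q_ge1 : 1 <= q by apply: powR_natr_ge1; lra.
have a_le_q : powR N (2 / 5) <= q by apply: ler_powR; rewrite ?natr_n_ge1 //; lra.
have p1N : p1 R n * N <= 9 * (mu R n)%:R.
  rewrite -ler_pdivlMr ?natr_n_gt0 // -natrM.
  by rewrite /p1 ge_min lexx orbT.
have L_le : L <= L ^+ 2 by rewrite expr2 ler_peMl //; lra.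
have aL_le : powR N (2 / 5) * L <= q * L ^+ 2 by apply: ler_pM; rewrite ?powR_ge0 //; lra.
have qL2_ge : L ^+ 2 <= q * L ^+ 2 by rewrite ler_peMl //; lra.
lra.
Qed.

Lemma p2_threshold_le : 2 * p2 R n * N + 2 * (2 * L) <= 6 * (q * L).
Proof.
have L_ge1 := ln_nat_ge1; have [mu_ge _] := andP mu_bounds.
have q_ge1 : 1 <= q by apply: powR_natr_ge1; lra.
have a_ge1 : 1 <= powR N (2 / 5) by apply: powR_natr_ge1; lra.
have p2N : p2 R n * N <= q.
  rewrite /p2 mulrC ler_pdivrMr; last by lra.
  by rewrite -[leLHS]powR_two_fifths_mul_three_fifths [leLHS]mulrC ler_wpM2l ?powR_ge0.
have qL_ge : q <= q * L by rewrite ler_peMr //; lra.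
have qL_ge' : L <= q * L by rewrite ler_peMl //; lra.
lra.
Qed.

Lemma two_expR_N2ln_le : 2 * expR (- (2 * L)) <= powR N (- 1).
Proof.
rewrite /powR gt_eqF ?natr_n_gt0 // mulN1r (_ : - L = - (2 * L) + L); last by ring.
rewrite expRD lnK ?posrE ?natr_n_gt0 // mulrC ler_wpM2l ?expR_ge0 //.
by rewrite (ler_nat R 2 n) (leq_trans _ n_ge4).
Qed.

Lemma cost_le_of_small_samples (e : rel 'I_n) (S1 S2 : {set 'I_n}) :
  symmetric e -> irreflexive e -> gconnected e ->
  #|S1|%:R <= 40 * (q * L ^+ 2) -> #|S2|%:R <= 6 * (q * L) ->
  cost R e S1 S2 <= 200 * (nedges e)%:R * q * L ^+ 2.
Proof.
move=> e_sym e_irr e_conn S1_le S2_le.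
set m : R := (nedges e)%:R; set Q := q * L ^+ 2.
have L_ge1 := ln_nat_ge1; have N_ge1 := natr_n_ge1.
have q_ge1 : 1 <= q by apply: powR_natr_ge1; lra.
have Q_ge1 : 1 <= Q by rewrite -[1]mulr1 ler_pM // expr_ge1 //; lra.
have N_le_2m : N <= 2 * m.
  by rewrite -natrM ler_nat nodes_le_2edges // (leq_trans _ n_ge4).
have m_le : m <= m * Q by rewrite ler_peMr //; lra.
have steps134 := @cost_steps134_le R n e e_sym e_irr S2.
rewrite natrD natrM [(8 * _)%:R]natrM -/m in steps134.
have step2 : #|S1|%:R * (n + nedges e)%:R <= (40 * Q) * (3 * m).
  by rewrite natrD; apply: ler_pM; rewrite ?ler0n //; lra.
have step5 : #|S2|%:R * (m + N * L + N) <= (6 * (q * L)) * (5 * (m * L)).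
  have NL_le : N * L <= 2 * m * L by rewrite ler_wpM2r //; lra.
  have m_leL : m <= m * L by rewrite ler_peMr ?ler0n.
  by apply: ler_pM; rewrite ?ler0n ?addr_ge0 ?mulr_ge0 ?ler0n //; lra.
rewrite (_ : 6 * _ * _ = 30 * (m * Q)) in step5; last by rewrite /Q; ring.
rewrite (_ : 40 * Q * _ = 120 * (m * Q)) in step2; last by ring.
rewrite (_ : 200 * m * q * L ^+ 2 = 200 * (m * Q)); last by rewrite /Q; ring.
rewrite /cost /cost_step2 /cost_step5 -/m; lra.
Qed.

End LargeN.

Theorem lemma9 (R : realType) :
  exists (C c : R) (k n0 : nat), 0 < C /\ 0 < c /\
    forall (n : nat) (e : rel 'I_n),
      (n0 <= n)%N -> symmetric e -> irreflexive e -> gconnected e ->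
      1 - powR (n%:R : R) (- c) <=
      @Pr_samples R n (fun S1 S2 =>
        @cost R n e S1 S2 <= C * (nedges e)%:R * powR (n%:R : R) (3 / 5)
                          * ln (n%:R : R) ^+ k).
Proof.
exists 200, 1, 2%N, 4%N; split; first lra; split; first lra.
move=> n e n_ge4 e_sym e_irr e_conn.
set L := ln (n%:R : R); set q := powR (n%:R : R) (3 / 5).
have p1_01 := p1_itv R n; have p2_01 := p2_itv R n.
have small_samples (S1 S2 : {set 'I_n}) :
    ~~ (40 * (q * L ^+ 2) < #|S1|%:R) -> ~~ (6 * (q * L) < #|S2|%:R) ->
    cost R e S1 S2 <= 200 * (nedges e)%:R * q * L ^+ 2.
  by rewrite -!leNgt; apply: cost_le_of_small_samples.
rewrite /Pr_samples; apply: le_trans (prod_weight_union_bound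
  (bern_set_ge0 p1_01) (bern_set_ge0 p2_01) (bern_set_sum1 _ _) (bern_set_sum1 _ _)
  small_samples).
have tail1 := bern_set_tail p1_01 (p1_threshold_le R n_ge4).
have tail2 := bern_set_tail p2_01 (p2_threshold_le R n_ge4).
have := two_expR_N2ln_le R n_ge4; rewrite -/L; lra.
Qed.
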